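(* Let $m\ge2$ and $2^m\le n<2^m+2^{m-1}-1$. Then every $f\in\mathbf{SB}_n$ satisfies $\mathcal{FAI}(f)\le\max\{2^m-2,\ 2n-3\cdot2^{m-1}+2\}$.
   Context: $\mathbf{SB}_n$ is the set of symmetric Boolean functions on $n$ variables; $\deg$ is the algebraic degree. $\mathcal{AI}(f)=\min\{\deg(g): g\neq0,\ gf=0 \text{ or } g(f+1)=0\}$ is the algebraic immunity, and the fast algebraic immunity is $\mathcal{FAI}(f)=\min\big(\{2\mathcal{AI}(f)\}\cup\{\deg(g)+\deg(gf): g\in\mathbf{B}_n,\ 1\le\deg(g)<\mathcal{AI}(f)\}\big)$, where $\mathbf{B}_n$ is the set of all Boolean functions on $n$ variables. *)

From mathcomp Require Import all_boot.
From mathcomp Require perm.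
Set Implicit Arguments. Unset Strict Implicit. Unset Printing Implicit Defensive.

Notation bvec n := ({ffun 'I_n -> bool}).
Notation boolfun n := ({ffun bvec n -> bool}).

Definition bmul n (g f : boolfun n) : boolfun n := [ffun x => g x && f x].
Definition bcompl n (f : boolfun n) : boolfun n := [ffun x => ~~ f x].
Definition bzero n : boolfun n := [ffun _ => false].

Definition supp n (x : bvec n) : {set 'I_n} := [set i | x i].

(* ANF coefficient of the monomial prod_{i in S} x_i (Moebius transform over F_2). *)
Definition anf n (f : boolfun n) (S : {set 'I_n}) : bool :=
  \big[addb/false]_(x : bvec n | supp x \subset S) f x.

(* Algebraic degree: largest |S| with nonzero ANF coefficient (0 for f = 0). *)
Definition deg n (f : boolfun n) : nat :=
  \max_(S : {set 'I_n} | anf f S) #|S|.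

(* Algebraic immunity. The set of admissible g is never empty
   (f and f+1 annihilate each other and one of them is nonzero). *)
Definition AI n (f : boolfun n) : nat :=
  \big[minn/n]_(g : boolfun n |
      (g != bzero n) && ((bmul g f == bzero n) || (bmul g (bcompl f) == bzero n)))
    deg g.

Definition FAI n (f : boolfun n) : nat :=
  minn (2 * AI f)
    (\big[minn/(2 * AI f)]_(g : boolfun n | (1 <= deg g) && (deg g < AI f))
        (deg g + deg (bmul g f))).

Definition sym_boolfun n (f : boolfun n) : Prop :=
  forall (s : perm.perm_of 'I_n) (x : bvec n), f [ffun i => x (perm.fun_of_perm s i)] = f x.

From HB Require Import structures.
From mathcomp Require Import all_boot perm zify.
Set Implicit Arguments. Unset Strict Implicit. Unset Printing Implicit Defensive.

(* A symmetric f is a function of the Hamming weight, f x = V |x|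
   (sym_boolfun_weight), and the ANF coefficient of such a function on a
   monomial of size k is the parity sum (+)_(w <= k) C(k, w) V(w)
   (anf_weight).  Degrees are thus governed by parities of binomial
   coefficients, which we control with the Lucas step
   C(k + 2^a, w) = C(k, w) + C(k, w - 2^a) (mod 2)  (odd_binD_pow2).

   To bound FAI f it suffices to exhibit g with 1 <= deg g and
   max (2 deg g, deg g + deg (g f)) below the bound (FAI_le).  With
   P = 2^(m-1) and n = 2P + t, t < P - 1, two cases arise:
   - V r = V (r + P) for some t < r < P: the indicator g of |x| = r (mod P)
     has degree in [r, P - 1] and f is constant on its support, so
     FAI f <= 2P - 2 (FAI_le_mod_indicator);
   - V u <> V (u + P) for all t < u < P: the elementary symmetric function
     g = sigma_(t+1) has degree t + 1 and deg (g f) <= P + t + 1, so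
     FAI f <= P + 2(t + 1) (FAI_le_elementary). *)

Local Notation oddC k w := (odd 'C(k, w)).

Lemma odd_binD_pow2 a k w :
  oddC (k + 2 ^ a) w = oddC k w (+) ((2 ^ a <= w) && oddC k (w - 2 ^ a)).
Proof.
elim: a k w => [|a IH] k w.
  rewrite expn0 addn1; case: w => [|w]; first by rewrite !bin0.
  by rewrite binS oddD subn1.
rewrite expnS mul2n -addnn addnA !IH.
case: (leqP (2 ^ a) w) => le_w /=; last first.
  by rewrite leqNgt ltn_addr // addbF.
rewrite -subnDA (leq_subRL _ le_w).
by rewrite !addbA -(addbA (oddC k w)) addbb addbF.
Qed.

(* Choosing a w-subset of a k-set and then a j-subset of it is the same as
   choosing the j-subset first and completing it inside the rest. *)
Lemma bin_mul_bin k w j : j <= w -> 'C(k, w) * 'C(w, j) = 'C(k, j) * 'C(k - j, w - j).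
Proof.
move=> le_jw; case: (leqP w k) => le_wk; last first.
  rewrite bin_small // mul0n; case: (leqP j k) => le_jk; last by rewrite bin_small.
  by rewrite (@bin_small (k - j)) ?muln0 //; lia.
have le_jk := leq_trans le_jw le_wk.
apply/eqP; rewrite -(@eqn_pmul2r (j`! * (w - j)`! * (k - w)`!)); last first.
  by rewrite !muln_gt0 !fact_gt0.
have le_wjkj : w - j <= k - j by rewrite leq_sub2r.
have -> : 'C(k, w) * 'C(w, j) * (j`! * (w - j)`! * (k - w)`!) = k`!.
  by rewrite -(bin_fact le_wk) -(bin_fact le_jw) -!mulnA.
rewrite -(bin_fact le_jk) -(bin_fact le_wjkj) subnBA // subnK //.
by rewrite -!mulnA (mulnCA j`!).
Qed.

Definition xsum (N : nat) (F : nat -> bool) : bool := \big[addb/false]_(0 <= u < N) F u.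

Lemma eq_xsum N F G : (forall u, u < N -> F u = G u) -> xsum N F = xsum N G.
Proof.
move=> eqFG; rewrite /xsum big_nat_cond [RHS]big_nat_cond.
by apply: eq_bigr => u /andP [/andP [_ lt_uN] _]; apply: eqFG.
Qed.

Lemma xsum_addb N F G : xsum N (fun u => F u (+) G u) = xsum N F (+) xsum N G.
Proof. exact: big_split. Qed.

Lemma xsum_andl N b F : xsum N (fun u => b && F u) = b && xsum N F.
Proof. by case: b => //; rewrite /xsum big1. Qed.

Lemma xsum_trunc M N F : M <= N -> (forall u, M <= u -> F u = false) ->
  xsum N F = xsum M F.
Proof.
move=> le_MN F0; rewrite /xsum (big_cat_nat (leq0n M) le_MN) /=.
rewrite [X in _ (+) X]big1_seq ?addbF // => u /andP [_].
by rewrite mem_index_iota => /andP [le_Mu _]; apply: F0.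
Qed.

Lemma xsum_shift P N F : P <= N ->
  xsum N (fun w => (P <= w) && F w) = xsum (N - P) (fun u => F (u + P)).
Proof.
move=> le_PN; rewrite /xsum (big_cat_nat (leq0n P) le_PN) /= big1_seq; last first.
  by move=> u /andP [_]; rewrite mem_index_iota => /andP [_ lt_uP]; rewrite leqNgt lt_uP.
by rewrite -{1}(add0n P) big_addn; apply: eq_bigr => u _; rewrite leq_addl.
Qed.

Lemma xsum_bin_pow2 a k N G : k + 2 ^ a < N ->
  xsum N (fun u => oddC (k + 2 ^ a) u && G u) =
  xsum N (fun u => oddC k u && (G u (+) G (u + 2 ^ a))).
Proof.
move=> lt_N.
have le_kN : k.+1 <= N by lia.
have le_kNa : k.+1 <= N - 2 ^ a by lia.
have vanish u b : k.+1 <= u -> oddC k u && b = false by move=> lt_ku; rewrite bin_small.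
rewrite (eq_xsum (G := fun u => oddC k u && G u (+)
                             (2 ^ a <= u) && (oddC k (u - 2 ^ a) && G u))); last first.
  by move=> u _; rewrite odd_binD_pow2 andb_addl andbA.
rewrite xsum_addb xsum_shift; last by lia.
rewrite (xsum_trunc le_kNa); last by move=> u; rewrite addnK; apply: vanish.
rewrite (xsum_trunc le_kN); last by move=> u; apply: vanish.
rewrite [RHS](xsum_trunc le_kN); last by move=> u; apply: vanish.
by rewrite -xsum_addb; apply: eq_xsum => u _; rewrite addnK andb_addr.
Qed.

(* A full nonzero row of Pascal's triangle has even sum 2^k. *)
Lemma xsum_odd_bin k N : 0 < k < N -> xsum N (fun u => oddC k u) = false.
Proof.
case: k => // k /andP [_ lt_kN].
rewrite (eq_xsum (G := fun u => oddC (k + 2 ^ 0) u && true)); last first.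
  by move=> u _; rewrite addn1 andbT.
rewrite xsum_bin_pow2 ?addn1 // /xsum big1 // => u _ /=.
exact: andbF.
Qed.

Lemma supp_inj n : injective (@supp n).
Proof.
move=> x y eq_xy; apply/ffunP => i.
by have := congr1 (fun A : {set 'I_n} => i \in A) eq_xy; rewrite !inE.
Qed.

Lemma supp_not_subset n (x y : bvec n) :
  x != y -> #|supp x| = #|supp y| -> ~~ (supp x \subset supp y).
Proof.
move=> neq_xy eq_wt; apply: contra neq_xy => sub_xy.
by apply/eqP/supp_inj/eqP; rewrite eqEcard sub_xy eq_wt /=.
Qed.

(* A symmetric function takes equal values on points of equal weight: a
   transposition of coordinates brings x strictly closer to y. *)
Lemma sym_weight n (f : boolfun n) : sym_boolfun f ->
  forall x y : bvec n, #|supp x| = #|supp y| -> f x = f y.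
Proof.
move=> symf.
suff by_dist d (x y : bvec n) :
    #|[set i | x i != y i]| <= d -> #|supp x| = #|supp y| -> f x = f y.
  by move=> x y; apply: by_dist.
(* x and y differ at some i in supp x; this already closes the case d = 0. *)
elim: d x => [|d IH] x dist_xy eq_wt; have [-> //|neq_xy] := eqVneq x y;
  case/subsetPn: (supp_not_subset neq_xy eq_wt) => i; rewrite !inE => xi yi;
  rewrite (cardsD1 i) inE xi (negbTE yi) // in dist_xy.
rewrite eq_sym in neq_xy.
case/subsetPn: (supp_not_subset neq_xy (esym eq_wt)) => j; rewrite !inE => yj xj.
(* Swapping i and j in x preserves f and the weight, and fixes coordinate i. *)
pose x' := [ffun k => x (tperm i j k)].
have -> : f x = f x' by rewrite symf.
apply: IH; last first.
  have -> : supp x' = tperm i j @^-1: supp x by apply/setP => k; rewrite !inE ffunE.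
  by rewrite card_preimset //; apply: perm_inj.
rewrite add1n ltnS in dist_xy; apply: leq_trans (subset_leq_card _) dist_xy.
apply/subsetP => k; rewrite !inE ffunE.
case: tpermP => [-> | -> | /eqP ne_ki _]; last by rewrite ne_ki.
  by rewrite (negbTE xj) (negbTE yi).
by rewrite xi yj.
Qed.

Lemma sym_boolfun_weight n (f : boolfun n) : sym_boolfun f ->
  exists V : nat -> bool, forall x, f x = V #|supp x|.
Proof.
move=> symf; exists (fun w => if [pick y : bvec n | #|supp y| == w] is Some y then f y else false).
move=> x; case: pickP => [y /eqP wt_y | no_y]; first exact: sym_weight.
by have := no_y x; rewrite eqxx.
Qed.

Lemma card_supp_draws n (S : {set 'I_n}) w :
  #|[set x : bvec n | supp x \subset S & #|supp x| == w]| = 'C(#|S|, w).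
Proof.
rewrite -(card_imset _ (@supp_inj n)) -cards_draws; apply: eq_card => A.
have supp_ind : supp [ffun i => i \in A] = A by apply/setP => i; rewrite inE ffunE.
rewrite [in RHS]inE; apply/imsetP/idP => [[x] | A_S].
  by rewrite inE => x_S ->.
by exists [ffun i => i \in A]; rewrite ?inE supp_ind.
Qed.

Lemma iter_addb c b : iter c (addb b) false = odd c && b.
Proof. by elim: c => //= c ->; case: b; case: (odd c). Qed.

Lemma anf_weight n (h : boolfun n) (V : nat -> bool) :
  (forall x, h x = V #|supp x|) ->
  forall S, anf h S = xsum #|S|.+1 (fun w => oddC #|S| w && V w).
Proof.
move=> hV S; rewrite /anf /xsum big_mkord.
have wt_lt x : supp x \subset S -> #|supp x| < #|S|.+1 by rewrite ltnS; apply: subset_leq_card.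
rewrite (partition_big (fun x : bvec n => (inord #|supp x| : 'I_#|S|.+1)) predT) //=.
apply: eq_bigr => w _.
rewrite (eq_bigr (fun _ => V w)); last first.
  by move=> x /andP [x_S /eqP <-]; rewrite hV inordK // wt_lt.
rewrite big_const iter_addb -(card_supp_draws S w); congr (odd _ && _).
apply: eq_card => x; rewrite [in RHS]inE -[in LHS]topredE /=.
case x_S: (supp x \subset S) => //=; apply/eqP/eqP => [<- | wt_x].
  by rewrite inordK // wt_lt.
by apply: val_inj; rewrite /= inordK // wt_lt.
Qed.

Lemma deg_le n (h : boolfun n) d : (forall S, anf h S -> #|S| <= d) -> deg h <= d.
Proof. by move=> anf_small; apply/bigmax_leqP. Qed.

Lemma deg_ge n (h : boolfun n) S : anf h S -> #|S| <= deg h.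
Proof. by move=> anf_S; apply: (@leq_bigmax_cond _ _ (fun S : {set 'I_n} => #|S|)). Qed.

Lemma deg_bzero n : deg (bzero n) = 0.
Proof.
apply/eqP; rewrite -leqn0; apply: deg_le => S.
by rewrite /anf big1 // => x _; rewrite ffunE.
Qed.

(* If f is constant on the support of g, then g f is 0 or g. *)
Lemma deg_bmul_const n (g f : boolfun n) c :
  (forall x, g x -> f x = c) -> deg (bmul g f) <= deg g.
Proof.
move=> f_const; case: c f_const => f_const.
  have -> // : bmul g f = g.
  by apply/ffunP => x; rewrite ffunE; case g_x: (g x) => //=; rewrite f_const.
have -> : bmul g f = bzero n.
  by apply/ffunP => x; rewrite !ffunE; case g_x: (g x) => //=; rewrite f_const.
by rewrite deg_bzero.
Qed.

Lemma exists_set_card n j : j <= n -> exists S : {set 'I_n}, #|S| = j.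
Proof.
move=> le_jn; have : 0 < #|[set A : {set 'I_n} | #|A| == j]|.
  by rewrite card_draws card_ord bin_gt0.
by case/card_gt0P => S; rewrite inE => /eqP; exists S.
Qed.

(* minn is associative and commutative, so bigD1 applies to the minimum in FAI. *)
HB.instance Definition _ := SemiGroup.isComLaw.Build nat minn minnA minnC.

(* Any g of positive degree witnesses an upper bound for the fast algebraic
   immunity: either deg g < AI f and g enters the minimum, or 2 AI f <= 2 deg g. *)
Lemma FAI_le n (f g : boolfun n) B :
  1 <= deg g -> 2 * deg g <= B -> deg g + deg (bmul g f) <= B -> FAI f <= B.
Proof.
move=> deg_pos le2_B le_B; rewrite /FAI; case: (ltnP (deg g) (AI f)) => lt_AI.
  by rewrite geq_min (bigD1 g) ?deg_pos //= geq_min le_B orbT.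
by rewrite geq_min (leq_trans _ le2_B) // leq_mul2l lt_AI orbT.
Qed.

Definition mod_indicator n P r : boolfun n := [ffun x => #|supp x| %% P == r].

(* For P = 2^a the degree is below P: a row k >= 2^a of Pascal's triangle is
   summed against a 2^a-periodic sequence, whose finite difference vanishes. *)
Lemma deg_mod_indicator_pow2 n a r : deg (mod_indicator n (2 ^ a) r) <= 2 ^ a - 1.
Proof.
apply: deg_le => S; rewrite (@anf_weight _ _ (fun w => w %% 2 ^ a == r)); last first.
  by move=> x; rewrite ffunE.
case: (ltnP #|S| (2 ^ a)) => [lt_S _ | le_S]; first by lia.
rewrite -(subnK le_S) xsum_bin_pow2 ?subnK //.
by rewrite /xsum big1 // => u _; rewrite modnDr addbb andbF.
Qed.

(* The coefficient of a monomial of size r < P is 1, so the degree is at least r. *)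
Lemma deg_mod_indicator_ge n P r : r < P -> r <= n -> r <= deg (mod_indicator n P r).
Proof.
move=> lt_rP le_rn; have [S card_S] := exists_set_card le_rn.
rewrite -{1}card_S; apply: deg_ge.
rewrite (@anf_weight _ _ (fun w => w %% P == r)); last by move=> x; rewrite ffunE.
rewrite card_S /xsum big_nat_recr //= binn modn_small // eqxx addbT.
rewrite big1_seq // => w; rewrite mem_index_iota => /andP [_ lt_wr].
by rewrite modn_small ?(ltn_eqF lt_wr) ?andbF //; lia.
Qed.

(* x |-> C(|x|, j) V(|x|) mod 2.  For V = 1 this is the elementary symmetric
   function sigma_j, and sigma_j f = weighted n j V when f x = V |x|. *)
Definition weighted n j (V : nat -> bool) : boolfun n :=
  [ffun x => oddC #|supp x| j && V #|supp x|].

Lemma anf_weighted n j V (S : {set 'I_n}) : anf (weighted n j V) S =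
  [&& j <= #|S|, oddC #|S| j & xsum (#|S|.+1 - j) (fun u => oddC (#|S| - j) u && V (u + j))].
Proof.
rewrite (@anf_weight _ _ (fun w => oddC w j && V w)); last by move=> x; rewrite ffunE.
set k := #|S|; case: (leqP j k) => le_jk /=; last first.
  rewrite /xsum big1 // => w _; case: (leqP w k) => le_wk; last by rewrite bin_small.
  by rewrite (@bin_small w) ?andbF //; lia.
rewrite (eq_xsum (G := fun w => oddC k j && ((j <= w) && (oddC (k - j) (w - j) && V w))));
  last first.
  move=> w _; case: (leqP j w) => le_jw /=; last by rewrite (@bin_small w) // !andbF.
  by rewrite andbA -oddM bin_mul_bin // oddM andbA.
rewrite xsum_andl xsum_shift ?leqW //.
by congr (_ && _); apply: eq_xsum => u _; rewrite addnK.
Qed.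

Lemma deg_elementary n j : j <= n -> deg (weighted n j (fun=> true)) = j.
Proof.
move=> le_jn; apply/eqP; rewrite eqn_leq; apply/andP; split.
  apply: deg_le => S; rewrite anf_weighted => /and3P [le_jS _].
  rewrite (eq_xsum (G := fun u => oddC (#|S| - j) u)); last by move=> u _; rewrite andbT.
  by apply: contraTT; rewrite -ltnNge => lt_jS; rewrite xsum_odd_bin //; lia.
have [S card_S] := exists_set_card le_jn.
by rewrite -{1}card_S; apply: deg_ge; rewrite anf_weighted card_S leqnn binn subSnn
  /xsum big_nat1 subnn bin0.
Qed.

(* If V (u) <> V (u + 2^a) for j <= u < 2^a, then sigma_j f has degree at
   most 2^a + j (for n < 2^(a+1) + j): on larger monomials either the finite
   difference of V is constant and the sum is that of a full binomial row, or
   C(k, j) is even by the Lucas step. *)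
Lemma deg_weighted_le n a j V : j < 2 ^ a -> n < 2 ^ a + 2 ^ a + j ->
  (forall u, j <= u < 2 ^ a -> V u != V (u + 2 ^ a)) ->
  deg (weighted n j V) <= 2 ^ a + j.
Proof.
move=> lt_ja lt_n V_jump; apply: deg_le => S; rewrite anf_weighted.
have le_Sn : #|S| <= n by rewrite (leq_trans (max_card _)) ?card_ord.
set k := #|S| in le_Sn *; case/and3P => le_jk odd_kj odd_sum.
rewrite leqNgt; apply/negP => lt_k; set k2 := k - j - 2 ^ a.
have kE : k = (j + k2) + 2 ^ a by lia.
case: (ltnP (j + k2) (2 ^ a)) => [lt_jk2 | le_jk2].
  move: odd_sum; have -> : k - j = k2 + 2 ^ a by lia.
  rewrite xsum_bin_pow2; last by lia.
  rewrite (eq_xsum (G := fun u => oddC k2 u)); last first.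
    move=> u _; case: (leqP u k2) => le_uk2; last by rewrite bin_small.
    have jump : V (u + j) != V (u + j + 2 ^ a) by apply: V_jump; lia.
    by rewrite addnAC; move: jump; case: (V _); case: (V _); rewrite ?andbT.
  by rewrite xsum_odd_bin //; lia.
move: odd_kj; rewrite kE odd_binD_pow2 leqNgt lt_ja /= addbF.
have -> : j + k2 = (j + k2 - 2 ^ a) + 2 ^ a by lia.
by rewrite odd_binD_pow2 leqNgt lt_ja /= addbF bin_small //; lia.
Qed.

(* Only
   the weights r and r + 2^a are congruent to r modulo 2^a, so f is constant
   on the support of the indicator g, and deg g, deg (g f) <= 2^a - 1. *)
Lemma FAI_le_mod_indicator n a r (f : boolfun n) (V : nat -> bool) :
  (forall x, f x = V #|supp x|) -> 0 < r < 2 ^ a -> r <= n -> n < 2 ^ a + 2 ^ a + r ->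
  V r = V (r + 2 ^ a) -> FAI f <= 2 * (2 ^ a - 1).
Proof.
move=> fV /andP [r_gt0 lt_ra] le_rn lt_n V_period.
pose g := mod_indicator n (2 ^ a) r.
have deg_g_ge : r <= deg g := deg_mod_indicator_ge lt_ra le_rn.
have deg_g_le : deg g <= 2 ^ a - 1 := deg_mod_indicator_pow2 n a r.
have deg_gf : deg (bmul g f) <= deg g.
  apply: (@deg_bmul_const _ _ _ (V r)) => x; rewrite ffunE fV => /eqP wt_mod.
  have le_wt : #|supp x| <= n by rewrite (leq_trans (max_card _)) ?card_ord.
  have wtE := divn_eq #|supp x| (2 ^ a); rewrite wt_mod in wtE.
  have lt_q2 : #|supp x| %/ 2 ^ a < 2 by rewrite -(@ltn_pmul2r (2 ^ a)) ?expn_gt0 //; lia.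
  by rewrite wtE; case: (_ %/ _) lt_q2 => [|[|]] //= _; rewrite ?mul1n addnC.
by apply: (@FAI_le _ _ g); lia.
Qed.

Lemma FAI_le_elementary n a j (f : boolfun n) (V : nat -> bool) :
  (forall x, f x = V #|supp x|) -> 0 < j < 2 ^ a -> j <= n -> n < 2 ^ a + 2 ^ a + j ->
  (forall u, j <= u < 2 ^ a -> V u != V (u + 2 ^ a)) -> FAI f <= 2 ^ a + 2 * j.
Proof.
move=> fV /andP [j_gt0 lt_ja] le_jn lt_n V_jump.
pose g := weighted n j (fun=> true).
have gfE : bmul g f = weighted n j V by apply/ffunP => x; rewrite !ffunE fV andbT.
have deg_g : deg g = j := deg_elementary le_jn.
have deg_gf := deg_weighted_le lt_ja lt_n V_jump.
by apply: (@FAI_le _ _ g); rewrite ?gfE; lia.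
Qed.

(* With P = 2^(m-1) and n = 2P + t, either V r = V (r + P) for some t < r < P
   (first case, bound 2P - 2 = 2^m - 2) or not (second case with j = t + 1,
   bound P + 2(t + 1) = 2n - 3P + 2). *)
Theorem corollary7 (m n : nat) (f : boolfun n) :
  2 <= m -> 2 ^ m <= n -> n < 2 ^ m + 2 ^ (m - 1) - 1 ->
  sym_boolfun f ->
  FAI f <= maxn (2 ^ m - 2) (2 * n - 3 * 2 ^ (m - 1) + 2).
Proof.
move=> le2m le_n lt_n /sym_boolfun_weight [V fV].
have powE : 2 ^ m = 2 ^ (m - 1) + 2 ^ (m - 1).
  by rewrite addnn -mul2n -expnS subn1 prednK // ltnW.
rewrite powE in le_n lt_n *; set P := 2 ^ (m - 1) in le_n lt_n *.
pose t := n - (P + P).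
case: (boolP [exists r : 'I_P, (t < r) && (V r == V (r + P))]).
  case/existsP => r /andP [lt_tr /eqP V_period]; have lt_rP := ltn_ord r.
  apply: leq_trans (FAI_le_mod_indicator fV _ _ _ V_period) _; rewrite ?leq_max; lia.
move/existsPn => no_period.
have V_jump u : t.+1 <= u < P -> V u != V (u + P).
  by case/andP => lt_tu lt_uP; have := no_period (Ordinal lt_uP); rewrite /= lt_tu.
apply: leq_trans (FAI_le_elementary fV _ _ _ V_jump) _; rewrite ?leq_max; lia.
Qed.
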